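(* There exists an NJ-symmetric ring $R$ such that the polynomial ring $R[x]$ is not NJ-symmetric.
   Context: Rings are associative with identity. $N(S)$ is the set of nilpotent elements, $J(S)$ the Jacobson radical of a ring $S$. $S$ is NJ-symmetric if for all $a,b,c\in S$, $abc\in N(S)$ implies $bac\in J(S)$. *)

From mathcomp Require Import all_boot all_order all_algebra.
Set Implicit Arguments. Unset Strict Implicit. Unset Printing Implicit Defensive.
Import GRing.Theory.
Local Open Scope ring_scope.

Definition nilpotent_elt (S : pzRingType) (a : S) : Prop :=
  exists n : nat, a ^+ n = 0.

Definition left_ideal (S : pzRingType) (I : S -> Prop) : Prop :=
  [/\ I 0,
      (forall x y, I x -> I y -> I (x + y)),
      (forall x, I x -> I (- x)) &
      (forall r x, I x -> I (r * x))].

Definition maximal_left_ideal (S : pzRingType) (M : S -> Prop) : Prop :=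
  [/\ left_ideal M, ~ M 1 &
      forall L : S -> Prop, left_ideal L -> ~ L 1 ->
        (forall x, M x -> L x) -> forall x, L x -> M x].

Definition jacobson (S : pzRingType) (a : S) : Prop :=
  forall M : S -> Prop, maximal_left_ideal M -> M a.

Definition NJ_symmetric (S : pzRingType) : Prop :=
  forall a b c : S, nilpotent_elt (a * b * c) -> jacobson (b * a * c).

From HB Require Import structures.
From mathcomp Require Import all_boot all_order all_algebra.
From mathcomp Require Import ring.
Set Implicit Arguments. Unset Strict Implicit. Unset Printing Implicit Defensive.
Import GRing.Theory Num.Theory.
Local Open Scope ring_scope.

(* Take R = [[Z_(2), Z_(2)], [2Z_(2), Z_(2)]] inside M_2(Q). Reducing the two
   diagonal entries modulo 2 gives ring morphisms R -> F_2, and 1 - k is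
   invertible in R whenever k lies in both kernels, so their common kernel is
   contained in J(R). As F_2 is commutative and reduced, abc nilpotent forces
   bac into that kernel: R is NJ-symmetric.
   In R[x], evaluate x at 1/2. Any column vector v != 0 of Q^2 is sent to e_1 by
   some 2^k v_j^-1 E_1j x^k, because 2^k v_j^-1 lies in Z_(2) for k large; hence
   the annihilator of e_1 is a maximal left ideal of R[x]. For a = E_22,
   b = E_12, c = 2E_21 we have abc = 0 while bac = 2E_11 does not kill e_1, so
   bac is not in J(R[x]). *)

Lemma jacobson_of_left_units (S : pzRingType) (k : S) :
  (forall r, exists v, v * (1 - r * k) = 1) -> jacobson k.
Proof.
move=> units M [[M0 MD MN MM] M1 Mmax].
pose L x := exists m r, M m /\ x = m + r * k.
have L_ideal : left_ideal L.
  split=> [|x y|x|s x].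
  - by exists 0, 0; rewrite mul0r addr0.
  - move=> [m [r [Mm ->]]] [m' [r' [Mm' ->]]].
    by exists (m + m'), (r + r'); rewrite mulrDl addrACA; split; first exact: MD.
  - move=> [m [r [Mm ->]]].
    by exists (- m), (- r); rewrite mulNr opprD; split; first exact: MN.
  - move=> [m [r [Mm ->]]].
    by exists (s * m), (s * r); rewrite mulrDr mulrA; split; first exact: MM.
apply: (Mmax L L_ideal) => [[m [r [Mm one_eq]]]|x Mx|].
- have [v v_inv] := units r; apply: M1; rewrite -v_inv.
  by apply: MM; rewrite one_eq addrK.
- by exists x, 0; rewrite mul0r addr0.
by exists 0, 1; rewrite mul1r add0r.
Qed.

Lemma NJ_symmetric_of_rmorphs (S : pzRingType) (D : idomainType) (I : Type)
    (pi : I -> {rmorphism S -> D}) :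
  (forall k, (forall i, pi i k = 0) -> jacobson k) -> NJ_symmetric S.
Proof.
move=> kerJ a b c [n abc_n]; apply: kerJ => i.
have /eqP : pi i (a * b * c) ^+ n = 0 by rewrite -rmorphXn abc_n rmorph0.
rewrite expf_eq0 => /andP[_ /eqP].
by rewrite !rmorphM [pi i b * _]mulrC.
Qed.

Lemma maximal_left_ideal_ann (S A : pzRingType) (phi : {rmorphism S -> A})
    (e : A) :
  e != 0 -> (forall f, phi f * e != 0 -> exists g, phi (g * f) * e = e) ->
  maximal_left_ideal (fun f => phi f * e = 0).
Proof.
move=> e_neq0 cyclic; split.
- split=> [|f g fe ge|f fe|r f fe]; first by rewrite rmorph0 mul0r.
  + by rewrite rmorphD mulrDl fe ge addr0.
  + by rewrite rmorphN mulNr fe oppr0.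
  + by rewrite rmorphM -mulrA fe mulr0.
- by rewrite rmorph1 mul1r; apply/eqP.
move=> L [_ LD _ LM] L1 ML f Lf; have [//|fe] := eqVneq (phi f * e) 0.
have [g gfe] := cyclic f fe; case: L1.
rewrite -(subrK (g * f) 1); apply: LD; last exact: LM.
by apply: ML; rewrite rmorphB rmorph1 mulrBl mul1r gfe subrr.
Qed.

Lemma ord2P (i : 'I_2) : i = 0 \/ i = 1.
Proof. by case: i => [[|[|//]] ?]; [left | right]; apply: val_inj. Qed.

Lemma mulmx2E (R : pzSemiRingType) n (A : 'M[R]_2) (B : 'M[R]_(2, n)) i j :
  (A *m B) i j = A i 0 * B 0 j + A i 1 * B 1 j.
Proof.
rewrite mxE !big_ord_recl big_ord0 addr0.
by have -> : lift ord0 ord0 = 1 :> 'I_2 by apply: val_inj.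
Qed.

Lemma delta_mulmx_delta (R : comPzRingType) m n p q (A : 'M[R]_(n, p))
    (i : 'I_m) j k (l : 'I_q) :
  delta_mx i j *m A *m delta_mx k l = A j k *: delta_mx i l.
Proof.
rewrite -(mul_delta_mx (0 : 'I_1) i j) -(mul_delta_mx (0 : 'I_1) k l).
rewrite -(mul_delta_mx (0 : 'I_1) i l) !mulmxA.
rewrite -[delta_mx i 0 *m _ *m A]mulmxA -[delta_mx i 0 *m _ *m _]mulmxA.
by rewrite -rowE -colE [col k _]mx11_scalar !mxE mul_mx_scalar scalemxAl.
Qed.

Lemma delta_mx_neq0 (R : nzRingType) m n (i : 'I_m) (j : 'I_n) :
  delta_mx i j != 0 :> 'M[R]_(m, n).
Proof. by apply/eqP => /matrixP/(_ i j)/eqP; rewrite !mxE !eqxx oner_eq0. Qed.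

(* Z2 is the local ring Z_(2); red2 is its residue map onto F_2 (junk outside
   Z2). *)
Definition Z2 : {pred rat} := fun q => odd `|denq q|.
Definition red2 (q : rat) : 'F_2 := (numq q)%:~R.

Lemma F2_intrE (x : int) : x%:~R = (odd `|x|)%:R :> 'F_2.
Proof.
rewrite [in LHS](intEsign x) rmorphM rmorphXn /= rmorphN1.
rewrite (oppr_pchar2 (pchar_Fp (isT : prime 2))) expr1n mul1r.
by rewrite -pmulrn -[LHS](Fp_nat_mod (isT : prime 2)) modn2.
Qed.

Lemma F2_intr_odd (x : int) : odd `|x| -> x%:~R = 1 :> 'F_2.
Proof. by rewrite F2_intrE => ->. Qed.

Lemma Z2_frac (q : rat) (n d : int) :
  odd `|d| -> q * d%:~R = n%:~R -> q \in Z2 /\ red2 q = n%:~R.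
Proof.
move=> d_odd qd.
have num_den : numq q * d = n * denq q.
  by apply: (@intr_inj rat); rewrite !intrM numqE -qd mulrAC.
have den_odd : odd `|denq q|.
  have : (`|denq q| %| `|numq q| * `|d|)%N.
    by rewrite -abszM num_den abszM dvdn_mull ?dvdnn.
  rewrite Gauss_dvdr; last by rewrite coprime_sym coprime_num_den.
  by move/dvdn_odd; apply.
split; first exact: den_odd.
have := congr1 (fun x : int => x%:~R : 'F_2) num_den.
by rewrite /= !intrM (F2_intrE d) (F2_intrE (denq q)) d_odd den_odd !mulr1.
Qed.

Lemma Z2_red2B q r : q \in Z2 -> r \in Z2 ->
  q - r \in Z2 /\ red2 (q - r) = red2 q - red2 r.
Proof.
move=> q2 r2.
have [] := @Z2_frac (q - r) (numq q * denq r - numq r * denq q) (denq q * denq r).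
- by rewrite abszM oddM; apply/andP; split.
- by rewrite !(intrM, intrB) !numqE; ring.
by move=> -> ->; rewrite intrB !intrM (F2_intr_odd q2) (F2_intr_odd r2) !mulr1.
Qed.

Lemma Z2_red2M q r : q \in Z2 -> r \in Z2 ->
  q * r \in Z2 /\ red2 (q * r) = red2 q * red2 r.
Proof.
move=> q2 r2; have [] := @Z2_frac (q * r) (numq q * numq r) (denq q * denq r).
- by rewrite abszM oddM; apply/andP; split.
- by rewrite !intrM !numqE; ring.
by move=> -> ->; rewrite intrM.
Qed.

Fact Z2_subring_closed : subring_closed Z2.
Proof.
split=> [|q r q2 r2|q r q2 r2]; first by [].
- exact: (Z2_red2B q2 r2).1.
- exact: (Z2_red2M q2 r2).1.
Qed.

HB.instance Definition _ := GRing.isSubringClosed.Build rat Z2 Z2_subring_closed.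

Lemma red2N : {morph red2 : q / - q}.
Proof. by move=> q; rewrite /red2 numqN intrN. Qed.

Lemma red2B : {in Z2 &, {morph red2 : q r / q - r}}.
Proof. by move=> q r q2 r2; rewrite (Z2_red2B q2 r2).2. Qed.

Lemma red2D : {in Z2 &, {morph red2 : q r / q + r}}.
Proof.
move=> q r q2 r2; move: (@red2B q (- r) q2).
by rewrite rpredN opprK red2N opprK; apply.
Qed.

Lemma red2M : {in Z2 &, {morph red2 : q r / q * r}}.
Proof. by move=> q r q2 r2; rewrite (Z2_red2M q2 r2).2. Qed.

Lemma red2_0 : red2 0 = 0. Proof. by rewrite /red2 (numq_int 0). Qed.

Lemma red2_1 : red2 1 = 1. Proof. by rewrite /red2 (numq_int 1). Qed.

Lemma Z2V q : q \in Z2 -> red2 q != 0 -> q^-1 \in Z2.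
Proof.
move=> q2; rewrite /red2 F2_intrE; case: (boolP (odd _)) => // num_odd _.
have num_neq0 : numq q != 0 by apply: contraTneq num_odd => ->.
apply: (proj1 (@Z2_frac q^-1 (denq q) (numq q) num_odd _)).
by rewrite numqE mulKf // -numq_eq0.
Qed.

Lemma Z2_expr2_div q : q != 0 -> exists k, 2 ^+ k / q \in Z2.
Proof.
move=> q_neq0; have num_gt0 : (0 < `|numq q|)%N by rewrite absz_gt0 numq_eq0.
have [m m_odd num_eq] := pfactor_coprime (isT : prime 2) num_gt0.
exists (logn 2 `|numq q|); set k := logn 2 _ in num_eq *.
pose d := (-1) ^+ (numq q < 0)%R * m%:Z.
have [] // := @Z2_frac (2 ^+ k / q) (denq q) d.
  by rewrite abszM abszX /= exp1n mul1n -coprime2n.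
have num_split : d%:~R * 2 ^+ k = q * (denq q)%:~R.
  rewrite -(numqE q) [in RHS](intEsign (numq q)) num_eq PoszM !intrM mulrA.
  by rewrite -(pmulrn 1 (2 ^ k)) natrX.
by rewrite mulrAC [2 ^+ k * _]mulrC num_split mulrAC mulfV ?mul1r.
Qed.

(* The paper's ring [[Z_(2), Z_(2)], [2Z_(2), Z_(2)]]. *)
Definition Rmx : {pred 'M[rat]_2} :=
  fun A => (A \is a mxOver Z2) && (red2 (A 1 0) == 0).

Lemma RmxP (A : 'M[rat]_2) :
  reflect ((forall i j, A i j \in Z2) /\ red2 (A 1 0) = 0) (A \in Rmx).
Proof.
apply: (iffP andP) => [[/mxOverP A_Z2 /eqP A10]|[A_Z2 A10]] //.
by split; [apply/mxOverP | apply/eqP].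
Qed.

Fact Rmx_subring_closed : subring_closed Rmx.
Proof.
split=> [|A B|A B].
- by apply/RmxP; split=> [i j|]; rewrite !mxE ?rpred_nat.
- move=> /RmxP[A_Z2 A10] /RmxP[B_Z2 B10].
  apply/RmxP; split=> [i j|]; rewrite !mxE; first by rewrite rpredB.
  by rewrite red2B // A10 B10 subr0.
move=> /RmxP[A_Z2 A10] /RmxP[B_Z2 B10].
apply/RmxP; split=> [i j|]; first by rewrite -mulmxE mulmx2E rpredD ?rpredM.
by rewrite -mulmxE mulmx2E red2D ?rpredM // !red2M // A10 B10 mul0r mulr0 addr0.
Qed.

HB.instance Definition _ := GRing.isSubringClosed.Build _ Rmx Rmx_subring_closed.

Lemma Rmx_scale_delta s i j : s \in Z2 -> ((i, j) != (1, 0)) || (red2 s == 0) ->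
  s *: delta_mx i j \in Rmx.
Proof.
move=> s_Z2 s_ij; apply/RmxP; split=> [a b|]; rewrite !mxE ?rpredM ?rpred_nat //.
rewrite red2M ?rpred_nat //.
case/orP: s_ij => [ij | /eqP ->]; last by rewrite mul0r.
suff -> : (1 == i) && (0 == j) = false by rewrite ?mulr0n red2_0 mulr0.
by apply: contraNF ij => /andP[/eqP <- /eqP <-].
Qed.

Lemma Rmx_left_inv (A : 'M[rat]_2) : A \in Rmx ->
  red2 (A 0 0) != 0 -> red2 (A 1 1) != 0 ->
  exists2 V, V \in Rmx & V *m A = 1%:M.
Proof.
move=> /RmxP[A_Z2 A10] A00 A11.
have det_Z2 : A 0 0 * A 1 1 - A 0 1 * A 1 0 \in Z2 by rewrite rpredB ?rpredM.
have det_unit : red2 (A 0 0 * A 1 1 - A 0 1 * A 1 0) != 0.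
  by rewrite red2B ?rpredM // !red2M // A10 mulr0 subr0 mulf_neq0.
have det_neq0 : A 0 0 * A 1 1 - A 0 1 * A 1 0 != 0.
  by apply: contraNneq det_unit => ->; rewrite red2_0.
(* for 2x2 matrices the adjugate is (tr A) I - A *)
exists ((A 0 0 * A 1 1 - A 0 1 * A 1 0)^-1 *: ((A 0 0 + A 1 1)%:M - A)).
  apply/RmxP; split=> [i j|]; rewrite !mxE.
    by rewrite rpredM ?Z2V // rpredB ?rpredMn ?rpredD.
  by rewrite /= mulr0n sub0r red2M ?rpredN ?Z2V // red2N A10 oppr0 mulr0.
apply/matrixP => i j; rewrite mulmx2E !mxE.
case: (ord2P i) => ->; case: (ord2P j) => -> /=;
  by rewrite ?mulr1n ?mulr0n; field.
Qed.

Record Rring := RRing { Rval : 'M[rat]_2; RvalP : Rval \in Rmx }.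
HB.instance Definition _ := [isSub for Rval].
HB.instance Definition _ := [Choice of Rring by <:].
HB.instance Definition _ := [SubChoice_isSubNzRing of Rring by <:].

Lemma Rring_Z2 (A : Rring) i j : val A i j \in Z2.
Proof. by have /RmxP[] := valP A. Qed.

Lemma Rring_red10 (A : Rring) : red2 (val A 1 0) = 0.
Proof. by have /RmxP[] := valP A. Qed.

Definition diag_red (i : 'I_2) (A : Rring) : 'F_2 := red2 (val A i i).

Fact diag_red_zmod_morphism i : zmod_morphism (diag_red i).
Proof. by move=> A B; rewrite /diag_red raddfB !mxE red2B ?Rring_Z2. Qed.

Fact diag_red_monoid_morphism i : monoid_morphism (diag_red i).
Proof.
split=> [|A B]; first by rewrite /diag_red rmorph1 mxE eqxx red2_1.
rewrite /diag_red rmorphM -mulmxE mulmx2E.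
rewrite red2D ?rpredM ?Rring_Z2 // !red2M ?Rring_Z2 //.
by case: (ord2P i) => ->; rewrite Rring_red10 ?mulr0 ?mul0r ?addr0 ?add0r.
Qed.

HB.instance Definition _ i := GRing.isZmodMorphism.Build _ _ (diag_red i)
  (diag_red_zmod_morphism i).
HB.instance Definition _ i := GRing.isMonoidMorphism.Build _ _ (diag_red i)
  (diag_red_monoid_morphism i).

Lemma Rring_left_unit (u : Rring) :
  (forall i, diag_red i u != 0) -> exists v, v * u = 1.
Proof.
move=> diag_unit.
have [V V_R V_inv] := Rmx_left_inv (valP u) (diag_unit 0) (diag_unit 1).
by exists (RRing V_R); apply: val_inj; rewrite rmorphM rmorph1 /= -mulmxE.
Qed.

Lemma jacobson_Rring (k : Rring) : (forall i, diag_red i k = 0) -> jacobson k.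
Proof.
move=> k0; apply: jacobson_of_left_units => r; apply: Rring_left_unit => i.
by rewrite rmorphB rmorph1 rmorphM /= k0 mulr0 subr0 oner_neq0.
Qed.

Lemma NJ_symmetric_Rring : NJ_symmetric Rring.
Proof.
exact: (@NJ_symmetric_of_rmorphs _ 'F_2 _ (fun i => diag_red i) jacobson_Rring).
Qed.

Definition half_mx : 'M[rat]_2 := (2^-1)%:M.

Lemma half_mx_comm : commr_rmorph (val : {rmorphism Rring -> 'M[rat]_2}) half_mx.
Proof. by move=> A; rewrite /GRing.comm /half_mx -!mulmxE scalar_mxC. Qed.

Definition eval_half : {rmorphism {poly Rring} -> 'M[rat]_2} :=
  horner_morph half_mx_comm.

Lemma eval_halfC (c : Rring) : eval_half c%:P = val c.
Proof. exact: horner_morphC. Qed.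

Lemma eval_half_CXn (c : Rring) k :
  eval_half (c%:P * 'X^k) = (2^-1) ^+ k *: val c.
Proof.
rewrite rmorphM rmorphXn eval_halfC /= (horner_morphX half_mx_comm).
by rewrite /half_mx -scalemx1 exprZn expr1n -scalerAr mulr1.
Qed.

Lemma ann_delta00_maximal :
  maximal_left_ideal (fun f : {poly Rring} => eval_half f * delta_mx 0 0 = 0).
Proof.
apply: maximal_left_ideal_ann => [|f fe]; first exact: delta_mx_neq0.
have [j fj0] : exists j, eval_half f j 0 != 0.
  have [f00|] := eqVneq (eval_half f 0 0) 0; last by exists 0.
  exists 1; apply: contra_neq fe => f10; apply/matrixP => a b.
  rewrite -mulmxE mulmx2E !mxE /=.
  by case: (ord2P a) => ->; rewrite ?f00 ?f10 !mul0r ?mulr0 addr0.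
have [k s_Z2] := Z2_expr2_div fj0.
exists ((RRing (@Rmx_scale_delta _ 0 j s_Z2 isT))%:P * 'X^k).
rewrite rmorphM -mulrA eval_half_CXn /= -!mulmxE mulmxA -!scalemxAl.
rewrite delta_mulmx_delta !scalerA -mulrA divfK //.
by rewrite exprVn mulVf ?scale1r // expf_neq0.
Qed.

Theorem theorem2p29 :
  exists R : nzRingType, NJ_symmetric R /\ ~ NJ_symmetric {poly R}.
Proof.
exists Rring; split; first exact: NJ_symmetric_Rring.
pose a := RRing (@Rmx_scale_delta 1 1 1 (rpred1 _) isT).
pose b := RRing (@Rmx_scale_delta 1 0 1 (rpred1 _) isT).
pose c := RRing (@Rmx_scale_delta 2 1 0 (rpred_nat _ 2) isT).
have abc0 : a * b * c = 0.
  apply: val_inj; rewrite !rmorphM /= -!mulmxE !scale1r.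
  by rewrite mul_delta_mx_0 ?mul0mx.
have bac : eval_half (b%:P * a%:P * c%:P) = 2 *: delta_mx 0 0.
  rewrite -!polyCM eval_halfC !rmorphM /= -!mulmxE !scale1r.
  by rewrite mul_delta_mx -scalemxAr mul_delta_mx.
move=> /(_ a%:P b%:P c%:P) NJx.
have /NJx/(_ _ ann_delta00_maximal)/eqP : nilpotent_elt (a%:P * b%:P * c%:P).
  by exists 1%N; rewrite expr1 -!polyCM abc0.
rewrite bac -mulmxE -scalemxAl mul_delta_mx.
by rewrite scaler_eq0 pnatr_eq0 (negbTE (delta_mx_neq0 _ _ _)).
Qed.
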